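(* Let $x\in\operatorname{dom}f$ and assume $\inf_{t\in T}f_t(x)>-\infty$. Under (SH), for every $\varepsilon>0$, \[ \mathrm{N}_{\operatorname{dom}f}(x)=\Big[\overline{\operatorname{co}}\Big(\bigcup_{t\in T}\partial_\varepsilon f_t(x)\Big)\Big]_\infty . \]
   Context: $X$ is a real separated locally convex space with dual $X^*$ carrying the weak$^*$ topology. $T$ is a nonempty index set, $\{f_t: t\in T\}$ are proper convex lsc functions $X\to\mathbb{R}\cup\{+\infty\}$, $f:=\sup_{t\in T}f_t$. $\partial_\varepsilon g(x)=\{x^*:\ g(y)\ge g(x)+\langle x^*,y-x\rangle-\varepsilon\ \forall y\}$ if $g(x)\in\mathbb{R}$ (empty otherwise). $\overline{\operatorname{co}}$ is the weak$^*$-closed convex hull; $C_\infty$ is the recession cone of a nonempty closed convex set $C$; $\mathrm{N}_A(x)$ is the normal cone. (SH): $T$ is compact Hausdorff and $t\mapsto f_t(z)$ is upper semicontinuous on $T$ for each $z\in X$. *)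

From HB Require Import structures.
From mathcomp Require Import all_boot all_order all_algebra.
From mathcomp Require Import all_classical all_reals.
From mathcomp Require Import topology normedtype tvs ereal.
Set Implicit Arguments.
Unset Strict Implicit.
Unset Printing Implicit Defensive.
Import Order.TTheory GRing.Theory Num.Theory.
Import numFieldTopology.Exports numFieldNormedType.Exports.
Local Open Scope classical_set_scope.
Local Open Scope ring_scope.

(* The topological dual
   X^* is represented as the set of continuous linear functionals X -> R;
   subsets of X^* are subsets of (X -> R) contained in [dual_elem]. *)

Section Defs.
Context {R : realType} {X : tvsType R}.

Definition dual_elem (phi : X -> R) : Prop :=
  (forall (a : R) (u v : X), phi (a *: u + v) = a * phi u + phi v)
  /\ continuous phi.

(* closedness in X^* for the weak* topology sigma(X^*, X): a subset C of X^*
   is weak*-closed iff its complement in X^* is weak*-open, i.e. every point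
   of X^* \ C has a basic weak* neighbourhood (finitely many points of X,
   radius e > 0) disjoint from C *)
Definition wstar_closed (C : set (X -> R)) : Prop :=
  forall phi, dual_elem phi -> ~ C phi ->
    exists (s : seq X) (e : R), 0 < e /\
      forall psi, dual_elem psi ->
        (forall z, z \in s -> `|psi z - phi z| < e) -> ~ C psi.

Definition dual_convex (C : set (X -> R)) : Prop :=
  forall phi psi (l : R), C phi -> C psi -> 0 <= l <= 1 ->
    C (fun z => l * phi z + (1 - l) * psi z).

Definition wstar_clco (A : set (X -> R)) : set (X -> R) :=
  [set phi | dual_elem phi /\
    forall C, C `<=` dual_elem -> wstar_closed C -> dual_convex C ->
      A `<=` C -> C phi].

Definition rec_cone (C : set (X -> R)) : set (X -> R) :=
  [set d | dual_elem d /\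
    forall c, C c -> forall l : R, 0 <= l -> C (fun z => c z + l * d z)].

Definition normal_cone (A : set X) (x : X) : set (X -> R) :=
  [set phi | dual_elem phi /\ forall y, A y -> phi (y - x) <= 0].

Local Open Scope ereal_scope.

(* epsilon-subdifferential; empty when g x is not finite *)
Definition eps_subdiff (g : X -> \bar R) (eps : R) (x : X) : set (X -> R) :=
  [set phi | dual_elem phi /\ exists r : R, g x = r%:E /\
     forall y, ((r + phi (y - x) - eps)%R)%:E <= g y].

Definition proper_fun (g : X -> \bar R) : Prop :=
  (forall y, g y != -oo) /\ exists y, g y < +oo.

Definition convex_efun (g : X -> \bar R) : Prop :=
  forall (x y : X) (l : R), (0 <= l <= 1)%R ->
    g (l *: x + (1 - l) *: y)%R <= l%:E * g x + (1 - l)%:E * g y.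

Definition edom (g : X -> \bar R) : set X := [set y | g y < +oo].

Definition sup_fun {T : Type} (ft : T -> X -> \bar R) : X -> \bar R :=
  fun y => ereal_sup (range (fun t => ft t y)).

End Defs.

Definition upper_semicontinuous {T : topologicalType} {R : numFieldType}
  (g : T -> \bar R) : Prop :=
  forall t (a : R), (g t < a%:E)%E ->
    exists2 V, nbhs t V & forall s, V s -> (g s < a%:E)%E.

From HB Require Import structures.
From mathcomp Require Import all_boot all_order all_algebra.
From mathcomp Require Import all_classical all_reals.
From mathcomp Require Import topology normedtype tvs ereal.
From mathcomp Require Import ring lra.
Import Order.TTheory GRing.Theory Num.Theory.
Import numFieldTopology.Exports numFieldNormedType.Exports.
Local Open Scope classical_set_scope.
Local Open Scope ring_scope.

(* In a locally convex space this yields (a) strict separation of a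
   functional from a weak*-closed convex set by a point evaluation, and (b)
   [steep_eps_subgradient]: if g grows faster than slope L along x + s z, then
   some eps-subgradient psi of g at x has psi z >= L (separate (x, g x - eps)
   from the epigraph of g swept backwards along (z, L)).

   A normal direction d
   that is not a recession direction gives by (a) a z with A bounded in the
   direction z and d z > 0; by (b) every f_t then grows at most linearly along
   x + s z, compactness of T and upper semicontinuity in t make this uniform,
   so x + s z lies in dom f for some s > 0, contradicting normality.
   Conversely, A lies in the weak*-closed half-space
   {p | p (y - x) <= f y - inf_t f_t x + eps} for each y in dom f, hence so
   does psi + l d for every l >= 0, forcing d (y - x) <= 0. *)

Section LinearFunctionals.
Context {R : realType} {V : lmodType R}.

Definition linear_functional (f : V -> R) :=
  forall (a : R) (u v : V), f (a *: u + v) = a * f u + f v.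

Lemma lfun0 f : linear_functional f -> f 0 = 0.
Proof. by move=> lf; have := lf 1 0 0; rewrite scale1r addr0 mul1r; lra. Qed.

Lemma lfunZ f a u : linear_functional f -> f (a *: u) = a * f u.
Proof. by move=> lf; rewrite -[a *: u]addr0 lf lfun0 // addr0. Qed.

Lemma lfunD f u v : linear_functional f -> f (u + v) = f u + f v.
Proof. by move=> lf; rewrite -[u]scale1r lf mul1r scale1r. Qed.

Lemma lfunN f u : linear_functional f -> f (- u) = - f u.
Proof. by move=> lf; rewrite -scaleN1r lfunZ // mulN1r. Qed.

Lemma lfunB f u v : linear_functional f -> f (u - v) = f u - f v.
Proof. by move=> lf; rewrite lfunD // lfunN. Qed.

Lemma lfun_sum f (n : nat) (a : 'I_n -> R) (w : 'I_n -> V) :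
  linear_functional f -> f (\sum_(i < n) a i *: w i) = \sum_(i < n) a i * f (w i).
Proof.
move=> lf; elim/big_rec2: _ => [|i y1 y2 _ IH]; first exact: lfun0.
by rewrite lf IH.
Qed.

Definition sublinear (q : V -> R) :=
  (forall u v, q (u + v) <= q u + q v) /\
  (forall l u, 0 < l -> q (l *: u) <= l * q u).

Lemma sublinear0 q : sublinear q -> q 0 = 0.
Proof.
move=> [qD qZ]; have := qD 0 0; rewrite addr0 => h1.
have := qZ 2^-1 0; rewrite scaler0 invr_gt0 => /(_ (ltr0Sn _ 1)) h2; lra.
Qed.

Lemma sublinearZ q l u : sublinear q -> 0 <= l -> q (l *: u) = l * q u.
Proof.
move=> sq; rewrite le_eqVlt => /orP[/eqP <-|l0].
  by rewrite scale0r mul0r sublinear0.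
apply/eqP; rewrite eq_le sq.2 //=.
have := sq.2 l^-1 (l *: u); rewrite invr_gt0 => /(_ l0).
rewrite scalerA mulVf ?gt_eqF // scale1r => h.
have : l * q u <= l * (l^-1 * q (l *: u)) by rewrite ler_pM2l.
by rewrite mulrA mulfV ?gt_eqF // mul1r.
Qed.

Lemma sublinear_opp q u : sublinear q -> - q (- u) <= q u.
Proof. by move=> sq; have := sq.1 u (- u); rewrite subrr sublinear0 //; lra. Qed.

Lemma inf_le_approx (S : set R) c : has_lbound S ->
  (forall e, 0 < e -> exists2 y, S y & y <= c + e) -> inf S <= c.
Proof.
move=> hb h; rewrite leNgt; apply/negP => ci.
have [|y Sy yle] := h ((inf S - c) / 2); first by rewrite divr_gt0 // subr_gt0.
have := ge_inf hb Sy; lra.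
Qed.

(* Reduction of a sublinear functional q along a direction u: the result is
   still sublinear, below q, and already "linear" on the pair u, -u. *)
Definition ray_reduce (q : V -> R) (u v : V) : R :=
  inf [set y | exists2 t, 0 <= t & y = q (v + t *: u) - t * q u].

Section RayReduce.
Context {q : V -> R} (u : V).
Hypothesis sq : sublinear q.

Let Sv v := [set y | exists2 t, 0 <= t & y = q (v + t *: u) - t * q u].

Let Sv_lb v : has_lbound (Sv v).
Proof.
exists (- q (- v)) => y [t t0 ->].
by have := sq.1 (v + t *: u) (- v); rewrite addrC addKr sublinearZ //; lra.
Qed.

Let Sv_inf v : has_inf (Sv v).
Proof. by split; [exists (q (v + 0 *: u) - 0 * q u); exists 0|exact: Sv_lb]. Qed.

Lemma ray_reduce_le v : ray_reduce q u v <= q v.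
Proof.
have := ge_inf (Sv_lb v) (ex_intro2 _ _ 0 (lexx 0) erefl).
by rewrite scale0r addr0 mul0r subr0.
Qed.

Lemma ray_reduce_opp : ray_reduce q u (- u) <= - q u.
Proof.
have := ge_inf (Sv_lb (- u)) (ex_intro2 _ _ 1 ler01 erefl).
by rewrite scale1r addNr sublinear0 // mul1r sub0r.
Qed.

Lemma ray_reduce_sublinear : sublinear (ray_reduce q u).
Proof.
split.
- move=> v1 v2; apply: inf_le_approx; first exact: Sv_lb.
  move=> e e0; have e2 : 0 < e / 2 by rewrite divr_gt0.
  have [_ [t1 t10 ->] h1] := inf_adherent e2 (Sv_inf v1).
  have [_ [t2 t20 ->] h2] := inf_adherent e2 (Sv_inf v2).
  exists (q (v1 + v2 + (t1 + t2) *: u) - (t1 + t2) * q u).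
    by exists (t1 + t2) => //; rewrite addr_ge0.
  have := sq.1 (v1 + t1 *: u) (v2 + t2 *: u).
  rewrite addrACA -scalerDl.
  by rewrite /ray_reduce -/(Sv v1) -/(Sv v2); lra.
- move=> l v l0; apply: inf_le_approx; first exact: Sv_lb.
  move=> e e0; have el : 0 < e / l by rewrite divr_gt0.
  have [_ [t t0 ->] h] := inf_adherent el (Sv_inf v).
  exists (q (l *: v + (l * t) *: u) - (l * t) * q u).
    by exists (l * t) => //; rewrite mulr_ge0 // ltW.
  rewrite -scalerA -scalerDr sublinearZ ?ltW // -mulrA -mulrBr.
  have : l * (q (v + t *: u) - t * q u) < l * (inf (Sv v) + e / l).
    by rewrite ltr_pM2l.
  have -> : l * (inf (Sv v) + e / l) = l * inf (Sv v) + e.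
    by rewrite mulrDr mulrCA mulfV ?gt_eqF // mulr1.
  by rewrite /ray_reduce -/(Sv v); lra.
Qed.

End RayReduce.

(* A sublinear functional that is minimal among sublinear functionals is
   linear: reducing it along u shows q (- u) = - q u. *)
Lemma minimal_sublinear_linear (q : V -> R) : sublinear q ->
  (forall q', sublinear q' -> (forall v, q' v <= q v) -> forall v, q v <= q' v) ->
  linear_functional q.
Proof.
move=> sq qmin.
have qN u : q (- u) = - q u.
  have := qmin _ (ray_reduce_sublinear u sq) (ray_reduce_le u sq) (- u).
  have := ray_reduce_opp u sq; have := sublinear_opp q u sq; lra.
have qD u v : q (u + v) = q u + q v.
  apply/eqP; rewrite eq_le sq.1 /=.
  by have := sq.1 (- u) (- v); rewrite -opprD !qN; lra.
move=> a u v; rewrite qD; congr (_ + _).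
have [a0|a0] := leP 0 a; first exact: sublinearZ.
by rewrite -[a]opprK scaleNr qN sublinearZ ?oppr_ge0 ?ltW // !mulNr.
Qed.

Definition chain_inf (A : set (V -> R)) (v : V) : R := inf [set q v | q in A].

Lemma chain_inf_sublinear (A : set (V -> R)) (mu : V -> R) : A !=set0 ->
  (forall q, A q -> sublinear q /\ forall v, q v <= mu v) ->
  (forall q q', A q -> A q' -> (forall v, q v <= q' v) \/ (forall v, q' v <= q v)) ->
  sublinear (chain_inf A) /\ forall q v, A q -> chain_inf A v <= q v.
Proof.
move=> [q0 Aq0] hA Atot.
have Sa_inf v : has_inf [set q v | q in A].
  split; first by exists (q0 v), q0.
  exists (- mu (- v)) => _ [q Aq <-]; have [sq qmu] := hA q Aq.
  by have := sublinear_opp q v sq; have := qmu (- v); lra.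
have inf_le q v : A q -> chain_inf A v <= q v.
  by move=> Aq; apply: (ge_inf (Sa_inf v).2); exists q.
split => //; split.
- move=> v1 v2; apply: inf_le_approx; first exact: (Sa_inf _).2.
  move=> e e0; have e2 : 0 < e / 2 by rewrite divr_gt0.
  have [_ [q1 Aq1 <-] h1] := inf_adherent e2 (Sa_inf v1).
  have [_ [q2 Aq2 <-] h2] := inf_adherent e2 (Sa_inf v2).
  rewrite -/(chain_inf A v1) -/(chain_inf A v2) in h1 h2.
  have [le12|le21] := Atot q1 q2 Aq1 Aq2.
  + exists (q1 (v1 + v2)); first by exists q1.
    by have := (hA q1 Aq1).1.1 v1 v2; have := le12 v2; lra.
  + exists (q2 (v1 + v2)); first by exists q2.
    by have := (hA q2 Aq2).1.1 v1 v2; have := le21 v1; lra.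
- move=> l v l0; apply: inf_le_approx; first exact: (Sa_inf _).2.
  move=> e e0; have el : 0 < e / l by rewrite divr_gt0.
  have [_ [q1 Aq1 <-] h1] := inf_adherent el (Sa_inf v).
  exists (q1 (l *: v)); first by exists q1.
  have := (hA q1 Aq1).1.2 l v l0.
  have : l * q1 v <= l * (chain_inf A v + e / l) by rewrite ler_pM2l // ltW.
  have -> : l * (chain_inf A v + e / l) = l * chain_inf A v + e.
    by rewrite mulrDr mulrCA mulfV ?gt_eqF // mulr1.
  lra.
Qed.

(* Zorn's lemma yields a minimal
   sublinear functional below [ray_reduce mu p0], which is linear. *)
Theorem hahn_banach (mu : V -> R) (p0 : V) : sublinear mu ->
  exists f, [/\ linear_functional f, forall v, f v <= mu v & mu p0 <= f p0].
Proof.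
move=> smu; pose mu0 := ray_reduce mu p0.
have smu0 : sublinear mu0 by exact: ray_reduce_sublinear.
pose Tq := {q : V -> R | sublinear q /\ forall v, q v <= mu0 v}.
pose Rq (s t : Tq) := `[< forall v, sval t v <= sval s v >].
have [[q [sq qmu]] qmax] : exists t, premaximal Rq t.
  apply: (ZL_preorder (exist _ mu0 (conj smu0 (fun v => lexx _)))).
  - by move=> t; apply/asboolP => v.
  - move=> r s t /asboolP h1 /asboolP h2; apply/asboolP => v.
    exact: le_trans (h2 v) (h1 v).
  move=> A Atot; pose B := [set sval s | s in A].
  have [[a Aa]|A0] := pselect (A !=set0); last first.
    by exists (exist _ mu0 (conj smu0 (fun v => lexx _))) => s As; exfalso; apply: A0; exists s.
  have [|||sB Bq] := @chain_inf_sublinear B mu0.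
  - by exists (sval a), a.
  - by move=> _ [s As <-]; exact: (svalP s).
  - move=> _ _ [s As <-] [s' As' <-].
    by case: (Atot s s' As As') => /asboolP; [right|left].
  have Bmu0 v : chain_inf B v <= mu0 v.
    by apply: le_trans (Bq _ v _) ((proj2 (svalP a)) v); exists a.
  exists (exist _ (chain_inf B) (conj sB Bmu0)) => s As.
  by apply/asboolP => v /=; apply: Bq; exists s.
have lq : linear_functional q.
  apply: minimal_sublinear_linear => // q' sq' q'q.
  have q'mu v : q' v <= mu0 v := le_trans (q'q v) (qmu v).
  by have /asboolP := qmax (exist _ q' (conj sq' q'mu)) (asboolT q'q).
exists q; split => //.
  by move=> v; apply: le_trans (qmu v) (ray_reduce_le p0 smu v).
by have := qmu (- p0); have := ray_reduce_opp p0 smu; rewrite (lfunN q) //; lra.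
Qed.

End LinearFunctionals.

Section ConvexSeparation.
Context {R : realType} {V : lmodType R}.

Definition is_convex (K : set V) := forall u v (l : R), K u -> K v -> 0 <= l <= 1 ->
  K (l *: u + (1 - l) *: v).

Definition absorbing (K : set V) := forall v, exists2 t : R, 0 < t & K (t *: v).

Lemma convex_scale {K : set V} {v : V} {l : R} : is_convex K -> K 0 -> K v ->
  0 <= l <= 1 -> K (l *: v).
Proof. by move=> cK K0 Kv l01; have := cK _ _ _ Kv K0 l01; rewrite scaler0 addr0. Qed.

Lemma conv_add (l : R) (a b a' b' : V) :
  l *: (a + b) + (1 - l) *: (a' + b') = (l *: a + (1 - l) *: a') + (l *: b + (1 - l) *: b').
Proof. by rewrite !scalerDr addrACA. Qed.

Lemma conv_const (l : R) (a : V) : l *: a + (1 - l) *: a = a.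
Proof. by rewrite -scalerDl addrC subrK scale1r. Qed.

Definition gauge (K : set V) (v : V) : R := inf [set t | 0 < t /\ K (t^-1 *: v)].

Section Gauge.
Context {K : set V}.
Hypotheses (cK : is_convex K) (K0 : K 0) (aK : absorbing K).

Let Sg v := [set t : R | 0 < t /\ K (t^-1 *: v)].

Let Sg_inf v : has_inf (Sg v).
Proof.
split; last by exists 0 => t [t0 _]; apply: ltW.
have [t t0 Kt] := aK v; exists t^-1; split; first by rewrite invr_gt0.
by rewrite invrK.
Qed.

Lemma gauge_le1 v : K v -> gauge K v <= 1.
Proof.
move=> Kv; apply: (ge_inf (Sg_inf v).2).
by split; [exact: ltr01|rewrite invr1 scale1r].
Qed.

Lemma gauge_lt1 v : gauge K v < 1 -> K v.
Proof.
move=> g1; have e0 : 0 < 1 - gauge K v by rewrite subr_gt0.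
have [t [t0 Kt] tlt] := inf_adherent e0 (Sg_inf v).
have : K (t *: (t^-1 *: v)).
  apply: convex_scale => //; rewrite ltW //=.
  by rewrite /gauge -/(Sg v) in tlt; apply: ltW; lra.
by rewrite scalerA mulfV ?gt_eqF // scale1r.
Qed.

Lemma gauge_sublinear : sublinear (gauge K).
Proof.
split.
- move=> v1 v2; apply: inf_le_approx; first exact: (Sg_inf _).2.
  move=> e e0; have e2 : 0 < e / 2 by rewrite divr_gt0.
  have [t1 [t10 Kt1] h1] := inf_adherent e2 (Sg_inf v1).
  have [t2 [t20 Kt2] h2] := inf_adherent e2 (Sg_inf v2).
  exists (t1 + t2); last by rewrite /gauge -/(Sg v1) -/(Sg v2); lra.
  have t12 : 0 < t1 + t2 by rewrite addr_gt0.
  split => //.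
  have l01 : 0 <= t1 / (t1 + t2) <= 1.
    by apply/andP; split; [rewrite divr_ge0 // ltW|rewrite ler_pdivrMr // mul1r lerDl ltW].
  have := cK _ _ _ Kt1 Kt2 l01; congr K.
  by rewrite !scalerA scalerDr; congr (_ *: _ + _ *: _); field;
    rewrite !gt_eqF.
- move=> l v l0; apply: inf_le_approx; first exact: (Sg_inf _).2.
  move=> e e0; have el : 0 < e / l by rewrite divr_gt0.
  have [t [t0 Kt] h] := inf_adherent el (Sg_inf v).
  exists (l * t).
    split; first by rewrite mulr_gt0.
    by rewrite scalerA invfM mulrAC mulVf ?gt_eqF // mul1r.
  have : l * t < l * (inf (Sg v) + e / l) by rewrite ltr_pM2l.
  have -> : l * (inf (Sg v) + e / l) = l * inf (Sg v) + e.
    by rewrite mulrDr mulrCA mulfV ?gt_eqF // mulr1.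
  by rewrite /gauge -/(Sg v); lra.
Qed.

End Gauge.

(* Separation of a point from C + U, with C convex and U a convex absorbing
   set containing 0: Hahn-Banach applied to the gauge of C - c0 + U. *)
Theorem separation (C U : set V) (p c0 : V) :
  is_convex C -> C c0 -> is_convex U -> U 0 -> absorbing U ->
  (forall c u, C c -> U u -> c + u <> p) ->
  exists f, linear_functional f /\ exists2 d : R, 0 < d &
    (forall c, C c -> f c + d <= f p) /\ (forall u, U u -> f u <= 1).
Proof.
move=> cC Cc0 cU U0 aU hdisj.
pose K := [set w | exists c u, [/\ C c, U u & w = c - c0 + u]].
have cK : is_convex K.
  move=> _ _ l [c1 [u1 [Cc1 Uu1 ->]]] [c2 [u2 [Cc2 Uu2 ->]]] l01.
  exists (l *: c1 + (1 - l) *: c2), (l *: u1 + (1 - l) *: u2).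
  by split; [exact: cC|exact: cU|rewrite !conv_add conv_const].
have K0 : K 0 by exists c0, 0; split => //; rewrite subrr addr0.
have aK : absorbing K.
  move=> v; have [t t0 Ut] := aU v; exists t => //.
  by exists c0, (t *: v); split => //; rewrite subrr add0r.
have [f [lf fmu fq]] := hahn_banach (gauge K) (p - c0) (gauge_sublinear cK aK).
have fK w : K w -> f w <= 1.
  by move=> Kw; exact: le_trans (fmu w) (gauge_le1 aK w Kw).
have gauge_p : 1 <= f (p - c0).
  apply: le_trans fq; rewrite leNgt; apply/negP => /(gauge_lt1 cK K0 aK).
  move=> [c [u [Cc Uu hp]]]; apply: (hdisj c u Cc Uu).
  by rewrite -(subrK c0 p) hp addrAC subrK.
have [t t0 Ut] := aU (p - c0).
exists f; split => //; exists t => //; split => [c Cc|u Uu].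
- have : f (c - c0 + t *: (p - c0)) <= 1 by apply: fK; exists c, (t *: (p - c0)).
  rewrite lfunD // lfunZ // !(lfunB f) // => h.
  have : t <= t * (f p - f c0) by rewrite -lfunB // ler_peMr // ltW.
  by move: gauge_p; rewrite lfunB //; lra.
- by apply: fK; exists c0, u; split => //; rewrite subrr add0r.
Qed.

End ConvexSeparation.

Section TvsNeighbourhoods.
Context {R : realType} {X : tvsType R}.

Lemma convex_nbhs0 {W : set X} : nbhs 0 W ->
  exists N : set X, [/\ is_convex N, nbhs 0 N & N `<=` W].
Proof.
move=> W0; have [B cB [Bop Bb]] := @locally_convex R X.
have [U [BU U0] UW] := Bb 0 W W0.
exists U; split => //; last by apply: open_nbhs_nbhs; split => //; apply: Bop.
move=> u v l Uu Uv /andP[l0 l1].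
have := cB U; rewrite inE => /(_ BU) /(_ u v (Itv01 l0 l1)).
by rewrite !inE => /(_ Uu Uv).
Qed.

(* Continuity of scalar multiplication at 0 makes neighbourhoods of 0
   absorbing. *)
Lemma nbhs0_absorbing {N : set X} : nbhs 0 N -> absorbing N.
Proof.
move=> N0 v; have /= := @scale_continuous R X (0, v) N.
rewrite scale0r => /(_ N0) [[B1 B2] /= [B1n B2n] BN].
have [e /= e0 he] := (nbhs_ballP _ _).1 B1n.
exists (e / 2); first by rewrite divr_gt0.
apply: (BN (e / 2, v)); split => //=; last exact: nbhs_singleton.
apply: he; rewrite /ball /= sub0r normrN ger0_norm ?divr_ge0 ?ltW //; lra.
Qed.

Lemma nbhs_translate0 {x : X} {V : set X} : nbhs x V -> nbhs 0 [set w | V (x + w)].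
Proof.
move=> Vx; have := @nbhsB R X V x (- x) Vx; rewrite addNr.
by apply: filterS => _ [v Vv <-] /=; rewrite addNKr.
Qed.

Lemma nbhs0_sub {U : set X} : nbhs 0 U ->
  exists2 W, nbhs 0 W & forall w1 w2, W w1 -> W w2 -> U (w1 - w2).
Proof.
move=> U0; have := @sub_continuous X (0, 0) U; rewrite /= subrr => /(_ U0).
move=> [[A1 A2] /= [A1n A2n] AU]; exists (A1 `&` A2); first exact: filterI.
by move=> w1 w2 [h1 _] [_ h2]; apply: (AU (w1, w2)).
Qed.

Lemma bounded_lfun_continuous {f : X -> R} {N : set X} : linear_functional f ->
  nbhs 0 N -> (forall w, N w -> f w <= 1) -> continuous f.
Proof.
move=> lf N0 hN x0; apply/cvgrPdist_lt => e e0.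
have e2 : e / 2 != 0 by rewrite gt_eqF // divr_gt0.
pose N' := N `&` [set - w | w in N].
have N'0 : nbhs 0 N' by apply: filterI => //; apply: nbhs0N.
have := nbhs0Z e2 N'0 => /(nbhsT x0).
apply: filterS => _ [_ [w [Nw [w' Nw' ew]] <-] <-].
rewrite (lfunD f) // (lfunZ f) // opprD addrA subrr add0r normrN normrM.
rewrite ger0_norm ?divr_ge0 ?ltW //.
have : `|f w| <= 1.
  rewrite ler_norml hN // andbT -ew (lfunN f) //.
  by have := hN _ Nw'; lra.
move=> h; have : e / 2 * `|f w| <= e / 2 * 1 by rewrite ler_pM2l ?divr_gt0.
lra.
Qed.

End TvsNeighbourhoods.

Lemma increasing_open_cover {T : topologicalType} {V : nat -> set T} :
  compact [set: T] -> (forall n, open (V n)) ->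
  (forall n m, (n <= m)%N -> V n `<=` V m) -> (forall t, exists n, V n t) ->
  exists n, forall t, V n t.
Proof.
move=> cT Vo Vmono Vcov; apply: contrapT => hno.
have hne n : exists t, ~ V n t.
  apply: contrapT => h; apply: hno; exists n => t.
  by apply: contrapT => Vt; apply: h; exists t.
pose F := filter_from [set: nat] (fun n => ~` V n).
have FF : Filter F.
  apply: filter_from_filter; first by exists 0%N.
  move=> i j _ _; exists (maxn i j) => // t nt.
  by split => Vt; apply: nt; [apply: (Vmono i)|apply: (Vmono j)];
    rewrite ?leq_maxl ?leq_maxr.
have PF : ProperFilter F.
  by apply: filter_from_proper => n _; have [t ht] := hne n; exists t.
have [t [_ ct]] := cT F PF filterT.
have [n Vnt] := Vcov t.
have /set0P := ct (~` V n) (V n) (ex_intro2 _ _ n I (@subset_refl _ _))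
  (open_nbhs_nbhs (conj (Vo n) Vnt)).
by move=> /negP; apply; apply/eqP; rewrite setICl.
Qed.

Lemma conv_norm_lt {R : realType} (r1 r2 l k : R) : `|r1| < k -> `|r2| < k ->
  0 <= l <= 1 -> `|l * r1 + (1 - l) * r2| < k.
Proof.
rewrite !ltr_norml => /andP[h1 h1'] /andP[h2 h2'] /andP[l0 l1].
have [->|lpos] := eqVneq l 0; first by rewrite mul0r add0r subr0 mul1r h2 h2'.
have lp : 0 < l by rewrite lt_neqAle eq_sym lpos.
have A1 : 0 < l * (r1 + k) by rewrite mulr_gt0 //; lra.
have A2 : 0 < l * (k - r1) by rewrite mulr_gt0 //; lra.
have B1 : 0 <= (1 - l) * (r2 + k) by rewrite mulr_ge0 //; lra.
have B2 : 0 <= (1 - l) * (k - r2) by rewrite mulr_ge0 //; lra.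
by apply/andP; split; lra.
Qed.

Section DualSpace.
Context {R : realType} {X : tvsType R}.

Lemma dual_comb (al be : R) (p1 p2 : X -> R) : dual_elem p1 -> dual_elem p2 ->
  dual_elem (fun z => al * p1 z + be * p2 z).
Proof.
move=> [l1 c1] [l2 c2]; split; first by move=> a u v; rewrite l1 l2; ring.
move=> z; have h1 := continuousM (@cst_continuous X R al z) (c1 z).
exact: continuousD h1 (continuousM (@cst_continuous X R be z) (c2 z)).
Qed.

(* Points of X^* outside a weak*-closed convex set D are strictly separated
   from D by an evaluation functional psi |-> psi z: the weak*-open
   neighbourhood only involves finitely many points of X, so one separates
   in R^n and pulls the separating functional back to a point z of X. *)
Lemma wstar_separation {D : set (X -> R)} {phi psi1 : X -> R} :
  D `<=` dual_elem -> wstar_closed D -> dual_convex D -> D psi1 ->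
  dual_elem phi -> ~ D phi ->
  exists z, exists2 del : R, 0 < del & forall psi, D psi -> psi z + del <= phi z.
Proof.
move=> Dd Dc Dcv Dpsi1 dphi nDphi.
have [s [e [e0 hse]]] := Dc phi dphi nDphi.
pose n := size s.
pose ev (psi : X -> R) : 'rV[R]_n := \row_(i < n) psi (nth 0 s i).
pose C := [set v : 'rV[R]_n | exists2 psi, D psi & v = ev psi].
pose U := [set v : 'rV[R]_n | forall i, `|v 0 i| < e].
have cC : is_convex C.
  move=> _ _ l [p1 Dp1 ->] [p2 Dp2 ->] l01.
  exists (fun w => l * p1 w + (1 - l) * p2 w); first exact: Dcv.
  by apply/rowP => i; rewrite !mxE.
have cU : is_convex U by move=> u v l Uu Uv l01 i; rewrite !mxE; apply: conv_norm_lt.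
have U0 : U 0 by move=> i; rewrite mxE normr0.
have aU : absorbing U.
  move=> v; pose M := \sum_(j < n) `|v 0 j|.
  have M0 : 0 <= M by apply: sumr_ge0 => j _.
  exists (e / (M + 1)); first by rewrite divr_gt0 // ltr_pwDr.
  move=> i; rewrite mxE normrM ger0_norm; last by rewrite divr_ge0 ?ltW // ltr_pwDr.
  have vi : `|v 0 i| <= M by rewrite /M (bigD1 i) //= lerDl sumr_ge0.
  by rewrite mulrAC ltr_pdivrMr ?ltr_pwDr // ltr_pM2l //; lra.
have hdisj c u : C c -> U u -> c + u <> ev phi.
  move: c => _ [psi Dpsi ->] Uu hpu; apply: (hse psi (Dd _ Dpsi)) => // z zs.
  have ilt : (index z s < n)%N by rewrite index_mem.
  have := Uu (Ordinal ilt).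
  have := congr1 (fun v : 'rV[R]_n => v 0 (Ordinal ilt)) hpu.
  rewrite /= !mxE /= nth_index // => <-.
  by rewrite opprD addrA subrr sub0r normrN.
have Cpsi1 : C (ev psi1) by exists psi1.
have [f [lf [d d0 [hC _]]]] := separation _ _ _ _ cC Cpsi1 cU U0 aU hdisj.
exists (\sum_(i < n) f 'e_i *: nth 0 s i), d => // psi Dpsi.
have ev_sum p : dual_elem p -> p (\sum_(i < n) f 'e_i *: nth 0 s i) = f (ev p).
  move=> [lp _]; rewrite lfun_sum // [ev p]row_sum_delta lfun_sum //.
  by apply: eq_bigr => i _; rewrite mxE mulrC.
by rewrite !ev_sum //; [apply: hC; exists psi|exact: Dd].
Qed.

Definition eval_halfspace (v : X) (K : R) : set (X -> R) :=
  [set p | dual_elem p /\ p v <= K].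

Lemma eval_halfspace_closed v K : wstar_closed (eval_halfspace v K).
Proof.
move=> p dp nH; have pK : K < p v by rewrite ltNge; apply/negP => h; apply: nH.
exists [:: v], (p v - K); split; first by rewrite subr_gt0.
move=> q dq hq [_ hqK]; have := hq v (mem_head _ _).
by rewrite ltr_norml => /andP[h1 _]; lra.
Qed.

Lemma eval_halfspace_convex v K : dual_convex (eval_halfspace v K).
Proof.
move=> p1 p2 l [d1 h1] [d2 h2] /andP[l0 l1]; split; first exact: dual_comb.
have i1 : l * p1 v <= l * K by rewrite ler_wpM2l.
have i2 : (1 - l) * p2 v <= (1 - l) * K by rewrite ler_wpM2l // subr_ge0.
lra.
Qed.

End DualSpace.

Lemma pair_lfun {R : realType} {V : lmodType R} (f : V * R^o -> R) :
  linear_functional f ->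
  linear_functional (fun w => f (w, 0)) /\ forall w r, f (w, r) = f (w, 0) + r * f (0, 1).
Proof.
move=> lf; split=> [c u v|w r].
  have -> : ((c *: u + v, 0) : V * R^o) = c *: ((u, 0) : V * R^o) + (v, 0).
    by congr (_, _); rewrite /= [c *: _]mulr0 addr0.
  by rewrite lf.
have -> : ((w, r) : V * R^o) = r *: ((0, 1) : V * R^o) + (w, 0).
  by congr (_, _); rewrite /= ?scaler0 ?add0r // [r *: _]mulr1 addr0.
by rewrite lf addrC.
Qed.

Section ConvexFunctions.
Context {R : realType} {X : tvsType R}.
Local Open Scope ereal_scope.

Lemma convex_efun_le {g : X -> \bar R} {u v : X} {l a b : R} : proper_fun g -> convex_efun g ->
  g u <= a%:E -> g v <= b%:E -> (0 <= l <= 1)%R ->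
  g (l *: u + (1 - l) *: v)%R <= (l * a + (1 - l) * b)%:E.
Proof.
move=> [gN _] cg gu gv l01; apply: le_trans (cg u v l l01) _.
move: gu gv (gN u) (gN v); case: (g u) => [a'| |]; case: (g v) => [b'| |] //= ha hb _ _.
rewrite -!EFinM -EFinD lee_fin; rewrite lee_fin in ha hb.
have /andP[l0 l1] := l01; have l1' : (0 <= 1 - l)%R by lra.
by have := ler_wpM2l l0 ha; have := ler_wpM2l l1' hb; lra.
Qed.

Lemma convex_ray_bound {g : X -> \bar R} {x z : X} {M B s s' : R} :
  proper_fun g -> convex_efun g -> g x <= M%:E -> (0 < s')%R -> (s' <= s)%R ->
  g (x + s *: z)%R < B%:E -> g (x + s' *: z)%R < (M + s' / s * (B - M))%:E.
Proof.
move=> pg cg gxM s'0 s's hB; have s0 : (0 < s)%R by apply: lt_le_trans s's.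
pose lam := (s' / s)%R.
have lam0 : (0 < lam)%R by rewrite divr_gt0.
have lam01 : (0 <= lam <= 1)%R by rewrite ltW //= ler_pdivrMr // mul1r.
move: hB (pg.1 (x + s *: z)%R); case Eb : (g (x + s *: z)%R) => [b| |] // hB _.
have gb : g (x + s *: z)%R <= b%:E by rewrite Eb.
have := convex_efun_le pg cg gb gxM lam01.
have -> : (lam *: (x + s *: z) + (1 - lam) *: x = x + s' *: z)%R.
  by rewrite scalerDr addrAC conv_const scalerA mulfVK ?gt_eqF.
move=> h; apply: le_lt_trans h _; rewrite lte_fin; rewrite lte_fin in hB.
have : (lam * b < lam * B)%R by rewrite ltr_pM2l.
by rewrite /lam; lra.
Qed.

End ConvexFunctions.

Section EpsSubgradient.
Context {R : realType} {X : tvsType R}.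
Context {g : X -> \bar R} {x z : X} {a L eps : R}.
Hypotheses (pg : proper_fun g) (cg : convex_efun g) (lg : lower_semicontinuous g).
Hypotheses (gx : g x = a%:E) (eps0 : 0 < eps).
Hypothesis steep : forall s, 0 < s -> ((a + s * L)%:E < g (x + s *: z)%R)%E.

Definition epi_ray : set (X * R^o) := [set c | exists y r s,
  [/\ (g y <= r%:E)%E, 0 <= s & c = (y - s *: z, r - s * L)]].

Lemma epi_ray_convex : is_convex epi_ray.
Proof.
move=> _ _ l [y1 [r1 [s1 [g1 s10 ->]]]] [y2 [r2 [s2 [g2 s20 ->]]]] l01.
have /andP[l0 l1] := l01.
exists (l *: y1 + (1 - l) *: y2), (l * r1 + (1 - l) * r2), (l * s1 + (1 - l) * s2).
split; first exact: convex_efun_le.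
- by rewrite addr_ge0 // mulr_ge0 // subr_ge0.
- congr (_, _); last by rewrite /= -[l *: _]/(l * _) -[(1 - l) *: _]/((1 - l) * _); ring.
  by rewrite conv_add !scalerN -opprD !scalerA -scalerDl.
Qed.

Lemma epi_ray_graph {y : X} {r : R} : g y = r%:E -> epi_ray (y, r).
Proof.
by move=> gy; exists y, r, 0; split => //; [rewrite gy|rewrite scale0r subr0 mul0r subr0].
Qed.

Lemma base_neighbourhood : exists S N, [/\ 0 < S, S * `|L| <= eps / 4,
  is_convex N, nbhs 0 N &
  forall s w, 0 <= s <= S -> N w -> ((a - eps / 2)%:E < g (x + (s *: z - w))%R)%E].
Proof.
have [V0 V0n V0g] : exists2 V0, nbhs x V0 & forall y, V0 y -> ((a - eps / 2)%:E < g y)%E.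
  by apply: lg; rewrite gx lte_fin ltrBlDr ltrDl divr_gt0.
have [W1 W1n W1s] := nbhs0_sub (nbhs_translate0 V0n).
have [N [cN Nn NW]] := convex_nbhs0 W1n.
have [t t0 Ntz] := nbhs0_absorbing Nn z.
have L1 : 0 < `|L| + 1 by rewrite ltr_pwDr.
pose S := Num.min t (eps / 4 / (`|L| + 1)).
exists S, N; split => //.
- by rewrite lt_min t0 !divr_gt0.
- have : S <= eps / 4 / (`|L| + 1) by rewrite ge_min lexx orbT.
  have S0 : 0 <= S by rewrite le_min !ltW ?divr_gt0.
  by rewrite ler_pdivlMr // mulrDr mulr1; lra.
move=> s w /andP[s0 sS] Nw; apply: V0g; apply: W1s (NW _ Nw).
apply: NW; have -> : s *: z = (s / t) *: (t *: z) by rewrite scalerA mulfVK // gt_eqF.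
apply: convex_scale => //; first exact: nbhs_singleton.
apply/andP; split; first by rewrite divr_ge0 // ltW.
by rewrite ler_pdivrMr // mul1r (le_trans sS) // ge_min lexx.
Qed.

Lemma ray_point_neighbourhood S : 0 < S -> exists N, [/\ is_convex N, nbhs 0 N &
  forall w l, N w -> 0 <= l <= 1 -> ((a + S * L)%:E < g (x + S *: z - l *: w)%R)%E].
Proof.
move=> S0.
have [V1 V1n V1g] : exists2 V1, nbhs (x + S *: z) V1 &
    forall y, V1 y -> ((a + S * L)%:E < g y)%E by exact/lg/steep.
have [N [cN Nn NV]] := convex_nbhs0 (nbhs0N (nbhs_translate0 V1n)).
exists N; split => // w l Nw l01; apply: V1g.
have [w' V1w' <-] := NV _ (convex_scale cN (nbhs_singleton Nn) Nw l01).
by rewrite opprK.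
Qed.

Section Disjointness.
Context {S : R} {N : set X}.
Hypotheses (S0 : 0 < S) (SL : S * `|L| <= eps / 4) (cN : is_convex N).
Hypothesis N_base : forall s w, 0 <= s <= S -> N w ->
  ((a - eps / 2)%:E < g (x + (s *: z - w))%R)%E.
Hypothesis N_ray : forall w l, N w -> 0 <= l <= 1 ->
  ((a + S * L)%:E < g (x + S *: z - l *: w)%R)%E.

Definition box : set (X * R^o) := [set u | N u.1 /\ `|u.2| < eps / 4].

Lemma box_nbhs0 : nbhs 0 N -> nbhs (0 : X * R^o) box.
Proof.
move=> Nn; exists (N, [set r : R^o | `|r| < eps / 4]) => /=; last first.
  by move=> [w r] [/= Nw hr]; split.
split => //; apply/nbhs_ballP; exists (eps / 4) => /=; first by rewrite divr_gt0.
by move=> r; rewrite /ball /= sub0r normrN.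
Qed.

Lemma box_convex : is_convex box.
Proof.
move=> [w1 r1] [w2 r2] l [/= Nw1 hr1] [/= Nw2 hr2] l01.
by split; [exact: cN|exact: conv_norm_lt].
Qed.

(* (x, a - eps) is not in epi_ray + box: for short steps s <= S this
   contradicts g > a - eps/2 near x, for long steps the convex combination
   with (x, a) contradicts g > a + S L near x + S z. *)
Lemma epi_ray_box_disjoint c u : epi_ray c -> box u -> c + u <> (x, a - eps).
Proof.
move: c u => _ [w rho] [y [r [s [gyr s0 ->]]]] [/= Nw hrho] [h1 h2].
have hy : y = x + (s *: z - w) by rewrite -h1 addrACA subrK subrr addr0.
have hr : r = a - eps + s * L - rho by move: h2; lra.
move: hrho; rewrite ltr_norml => /andP[hrho1 hrho2].
have [sS|Ss] := leP s S.
- have : ((a - eps / 2)%:E < r%:E)%E.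
    by apply: lt_le_trans gyr; rewrite hy; apply: N_base; rewrite ?s0.
  rewrite lte_fin => har.
  have : s * L <= S * `|L|.
    by apply: le_trans (ler_wpM2r (normr_ge0 L) sS); rewrite ler_wpM2l // ler_norm.
  by move: SL; lra.
- have sp : 0 < s by apply: lt_trans Ss.
  pose lam := S / s.
  have lam0 : 0 < lam by rewrite divr_gt0.
  have lam01 : 0 <= lam <= 1 by rewrite ltW //= ler_pdivrMr // mul1r ltW.
  have lams : lam * s = S by rewrite /lam mulfVK // gt_eqF.
  have hP : lam *: y + (1 - lam) *: x = x + S *: z - lam *: w.
    by rewrite hy scalerDr addrAC conv_const scalerBr scalerA lams addrA.
  have gxa : (g x <= a%:E)%E by rewrite gx.
  have := convex_efun_le pg cg gyr gxa lam01; rewrite hP => hle.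
  have := lt_le_trans (N_ray _ _ Nw lam01) hle; rewrite lte_fin => hlt.
  have : lam * r + (1 - lam) * a = a + S * L - lam * (eps + rho).
    by rewrite hr -lams; ring.
  have : 0 < lam * (eps + rho) by rewrite mulr_gt0 //; lra.
  lra.
Qed.

End Disjointness.

Section SeparatingFunctional.
Context {N : set X} {f : X * R^o -> R} {d : R}.
Hypotheses (Nn : nbhs 0 N) (lf : linear_functional f) (d0 : 0 < d).
Hypothesis f_sep : forall c, epi_ray c -> f c + d <= f (x, a - eps).
Hypothesis f_box : forall w, N w -> f (w, 0) <= 1.

(* The separating hyperplane is not vertical: its slope -f(0,1) is
   positive, and psi = f(., 0) / slope is the sought eps-subgradient. *)
Let k := - f (0, 1).
Let psi w := f (w, 0) / k.

Let f_lin : linear_functional (fun w => f (w, 0)).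
Proof. by have [] := pair_lfun _ lf. Qed.

Let f_split w r : f (w, r) = f (w, 0) + r * f (0, 1).
Proof. by have [_ ->] := pair_lfun _ lf. Qed.

Let f_subr u v : f (u - v, 0) = f (u, 0) - f (v, 0).
Proof. exact: (lfunB _ _ _ f_lin). Qed.

Lemma slope_pos : 0 < k.
Proof.
have := f_sep _ (epi_ray_graph gx); rewrite (f_split x a) (f_split x (a - eps)).
rewrite mulrBl oppr_gt0 => h.
rewrite ltNge; apply/negP => hb.
by have := mulr_ge0 (ltW eps0) hb; have := d0; lra.
Qed.

(* psi is continuous since it is bounded on the neighbourhood k N of 0. *)
Lemma psi_dual : dual_elem psi.
Proof.
have k0 := slope_pos.
have lpsi : linear_functional psi.
  by move=> c u v; rewrite /psi f_lin mulrDl mulrA.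
have kn0 : k != 0 by rewrite gt_eqF.
split => //; apply: (bounded_lfun_continuous lpsi (nbhs0Z kn0 Nn)).
move=> _ [w Nw <-]; rewrite /psi (lfunZ _ _ _ f_lin).
by rewrite mulrAC mulfV ?gt_eqF // mul1r; apply: f_box.
Qed.

(* Separation from the graph points (y, g y) is the eps-subgradient
   inequality; separation from (x - s z, a - s L) gives psi z >= L. *)
Lemma psi_eps_subdiff : eps_subdiff g eps x psi.
Proof.
split; first exact: psi_dual.
exists a; split => // y; move: (pg.1 y); case Egy : (g y) => [r| |] // _; last exact: leey.
have := f_sep _ (epi_ray_graph Egy); rewrite (f_split y r) (f_split x (a - eps)) => h.
have k0 := slope_pos.
rewrite lee_fin /psi f_subr.
have : (f (y, 0) - f (x, 0)) / k <= r - a + eps.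
  by rewrite ler_pdivrMr // mulrC /k; have := d0; lra.
lra.
Qed.

Lemma psi_dir : L <= psi z.
Proof.
have k0 := slope_pos.
rewrite /psi ler_pdivlMr //; rewrite leNgt; apply/negP => hlt.
pose del := L * k - f (z, 0).
have del0 : 0 < del by rewrite subr_gt0.
pose s := eps * k / del.
have s0 : 0 <= s by rewrite divr_ge0 // ltW // mulr_gt0.
have Cs : epi_ray (x - s *: z, a - s * L) by exists x, a, s; rewrite gx.
have := f_sep _ Cs; rewrite (f_split (x - _) (a - _)) (f_split x (a - eps)).
rewrite f_subr (lfunZ _ _ _ f_lin).
have sdel : s * del = eps * k by rewrite /s mulfVK // gt_eqF.
by rewrite /del /k in sdel hlt *; have := d0; lra.
Qed.

End SeparatingFunctional.

(* If g grows along the ray from x faster than slope L, some eps-subgradient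
   of g at x has slope at least L in the direction z: separate (x, a - eps)
   from epi_ray by the box built on the two neighbourhoods above. *)
Theorem steep_eps_subgradient : exists psi, eps_subdiff g eps x psi /\ L <= psi z.
Proof.
have [S [N1 [S0 SL cN1 N1n N1_base]]] := base_neighbourhood.
have [N2 [cN2 N2n N2_ray]] := ray_point_neighbourhood _ S0.
pose N := N1 `&` N2.
have cN : is_convex N.
  by move=> u v l [] ? ? [] ? ? l01; split; [exact: cN1|exact: cN2].
have Nn : nbhs 0 N by apply: filterI.
have boxn := box_nbhs0 Nn.
have [f [lf [d d0 [hC hU]]]] := separation _ _ _ _ epi_ray_convex
  (epi_ray_graph gx) (box_convex cN) (nbhs_singleton boxn) (nbhs0_absorbing boxn)
  (epi_ray_box_disjoint (N := N) S0 SL (fun s w h Nw => N1_base s w h Nw.1)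
                                      (fun w l Nw h => N2_ray w l Nw.2 h)).
have f_box w : N w -> f (w, 0) <= 1.
  by move=> Nw; apply: hU; split => //=; rewrite normr0 divr_gt0.
exists (fun w => f (w, 0) / - f (0, 1)).
by split; [exact: psi_eps_subdiff Nn lf d0 hC f_box|exact: psi_dir lf d0 hC].
Qed.

End EpsSubgradient.

Lemma fine_bounded {R : realType} {u : \bar R} : (-oo < u)%E -> (u < +oo)%E -> u = (fine u)%:E.
Proof. by case: u. Qed.

Section NormalCone.
Context {R : realType} {X : tvsType R} {T : topologicalType}.
Context {ft : T -> X -> \bar R} {x : X} {eps : R}.
Variable t0 : T.
Hypotheses (prop : forall t, proper_fun (ft t)) (cvx : forall t, convex_efun (ft t)).
Hypotheses (lsc : forall t, lower_semicontinuous (ft t)).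
Hypotheses (cT : compact [set: T]) (usc : forall z, upper_semicontinuous (fun t => ft t z)).
Hypotheses (xdom : edom (sup_fun ft) x).
Hypotheses (hinf : (-oo < ereal_inf (range (fun t => ft t x)))%E) (eps0 : 0 < eps).

Let f := sup_fun ft.
Let A := \bigcup_(t in [set: T]) eps_subdiff (ft t) eps x.
Let m := fine (ereal_inf (range (fun t => ft t x))).
Let M := fine (f x).

Lemma le_sup_fun t y : (ft t y <= f y)%E.
Proof. by apply: ereal_sup_ubound; exists t. Qed.

Lemma base_values t : exists a, [/\ ft t x = a%:E, m <= a & a <= M].
Proof.
have inf_le : (ereal_inf (range (fun t => ft t x)) <= ft t x)%E.
  by apply: ereal_inf_lbound; exists t.
have sup_lt : (ft t x < +oo)%E := le_lt_trans (le_sup_fun t x) xdom.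
have inf_ft := lt_le_trans hinf inf_le.
have ftx := fine_bounded inf_ft sup_lt.
have infm : ereal_inf (range (fun t => ft t x)) = m%:E.
  exact: fine_bounded hinf (le_lt_trans inf_le sup_lt).
have supM : f x = M%:E := fine_bounded (lt_le_trans inf_ft (le_sup_fun t x)) xdom.
exists (fine (ft t x)); split => //; rewrite -lee_fin -ftx.
- by rewrite -infm.
- by rewrite -supM le_sup_fun.
Qed.

(* A is nonempty: apply [steep_eps_subgradient] with the trivial slope -1. *)
Lemma subgradients_nonempty : exists psi, A psi.
Proof.
have [a [ftx _ _]] := base_values t0.
have [|psi [psiA _]] := steep_eps_subgradient (z := 0) (L := -1) (prop t0) (cvx t0) (lsc t0) ftx eps0.
  by move=> s s0; rewrite scaler0 addr0 ftx lte_fin; lra.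
by exists psi, t0.
Qed.

Lemma bounded_slope_growth z K : (forall p, A p -> p z <= K) ->
  forall t, exists2 s, 0 < s & (ft t (x + s *: z)%R <= (M + s * (K + 1))%:E)%E.
Proof.
move=> AK t; have [a [ftx _ aM]] := base_values t.
apply: contrapT => hno.
have steep s : 0 < s -> ((a + s * (K + 1))%:E < ft t (x + s *: z)%R)%E.
  move=> s0; rewrite ltNge; apply/negP => hle; apply: hno; exists s => //.
  by apply: le_trans hle _; rewrite lee_fin; lra.
have [p [pA pz]] := steep_eps_subgradient (prop t) (cvx t) (lsc t) ftx eps0 steep.
have := AK p (ex_intro2 _ _ t I pA); lra.
Qed.

Lemma ray_level_mono z L s s' : 0 < s' -> s' <= s -> forall t,
  (ft t (x + s *: z)%R < (M + s * L + 1)%:E)%E ->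
  (ft t (x + s' *: z)%R < (M + s' * L + 1)%:E)%E.
Proof.
move=> s'0 s's t hs; have s0 : 0 < s by apply: lt_le_trans s's.
have [a [ftx _ aM]] := base_values t.
have ftxM : (ft t x <= M%:E)%E by rewrite ftx lee_fin.
apply: lt_le_trans (convex_ray_bound (prop t) (cvx t) ftxM s'0 s's hs) _.
rewrite lee_fin.
have -> : M + s' / s * (M + s * L + 1 - M) = M + s' * L + s' / s.
  by field; rewrite gt_eqF.
have : s' / s <= 1 by rewrite ler_pdivrMr // mul1r.
lra.
Qed.

(* Compactness of T and upper semicontinuity in t make the growth bound
   uniform: for one step s > 0, x + s z lies in the domain of f. *)
Lemma uniform_step z L :
  (forall t, exists2 s, 0 < s & (ft t (x + s *: z)%R <= (M + s * L)%:E)%E) ->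
  exists2 s, 0 < s & edom f (x + s *: z).
Proof.
move=> growth.
pose V n := [set t | (ft t (x + n.+1%:R^-1 *: z)%R < (M + n.+1%:R^-1 * L + 1)%:E)%E].
have Vopen n : open (V n).
  rewrite openE => t Vt; have [W Wt hW] := usc (x + n.+1%:R^-1 *: z) t _ Vt.
  by apply: filterS Wt => t' /hW.
have Vmono n k : (n <= k)%N -> V n `<=` V k.
  move=> nk t; apply: ray_level_mono; first by rewrite invr_gt0.
  by rewrite lef_pV2 ?posrE ?ltr0n // ler_nat ltnS.
have Vcover t : exists n, V n t.
  have [s s0 hs] := growth t; exists (Num.Def.truncn s^-1).
  have hN := truncnS_gt s^-1.
  apply: (ray_level_mono _ _ s); first by rewrite invr_gt0.
    have N0 : 0 < (Num.Def.truncn s^-1).+1%:R :> R by rewrite ltr0n.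
    rewrite -div1r ler_pdivrMr // mulrC ltW //.
    by rewrite -[X in X < _](mulVf (lt0r_neq0 s0)) ltr_pM2r.
  by apply: le_lt_trans hs _; rewrite lte_fin ltrDl.
have [n Vn] := increasing_open_cover cT Vopen Vmono Vcover.
exists n.+1%:R^-1; first by rewrite invr_gt0.
apply: (le_lt_trans _ (ltry (M + n.+1%:R^-1 * L + 1))).
by apply: ge_ereal_sup => _ [t _ <-]; apply/ltW/Vn.
Qed.

(* Otherwise c + l d leaves some weak*-closed convex D
   containing the hull; separating it by an evaluation at z bounds A in the
   direction z while d z > 0, and the uniform step contradicts normality. *)
Lemma normal_sub_recession :
  normal_cone (edom f) x `<=` rec_cone (wstar_clco A).
Proof.
move=> d [dd hd]; split => // c [dc hc] l l0.
have dcl : dual_elem (fun z => c z + l * d z).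
  have := dual_comb 1 l _ _ dc dd.
  by congr dual_elem; apply/funext => w; rewrite mul1r.
split => // D Dd Dc Dcv AD; apply: contrapT => nD.
have [psi1 A1] := subgradients_nonempty.
have [z [del del0 hz]] := wstar_separation Dd Dc Dcv (AD _ A1) dcl nD.
have cz := hz c (hc D Dd Dc Dcv AD).
have dz : 0 < d z.
  rewrite ltNge; apply/negP => dz0.
  have : l * d z <= 0 by rewrite mulr_ge0_le0.
  lra.
have AK p : A p -> p z <= c z + l * d z - del by move=> /AD /hz; lra.
have [s s0 dom_s] := uniform_step _ _ (bounded_slope_growth _ _ AK).
have := hd _ dom_s; rewrite addrAC subrr add0r (lfunZ _ _ _ dd.1).
have : 0 < s * d z by rewrite mulr_gt0.
lra.
Qed.

Lemma subgradients_in_halfspace y : edom f y ->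
  A `<=` eval_halfspace (y - x) (fine (f y) - m + eps).
Proof.
move=> domy p [t _ [dp [r [ftx hr]]]]; split => //.
have fy : f y = (fine (f y))%:E.
  apply: fine_bounded domy; apply: lt_le_trans (le_sup_fun t0 y).
  by rewrite ltNye (prop t0).1.
have h : r + p (y - x) - eps <= fine (f y).
  by rewrite -lee_fin -fy; exact: le_trans (hr y) (le_sup_fun t y).
have [a [ftx' ma _]] := base_values t.
by move: ftx; rewrite ftx' => -[ar]; rewrite ar in ma; lra.
Qed.

(* Second inclusion: along a recession direction d, psi1 + l d stays in
   every such half-space, which forces d (y - x) <= 0. *)
Lemma recession_sub_normal :
  rec_cone (wstar_clco A) `<=` normal_cone (edom f) x.
Proof.
move=> d [dd hrec]; split => // y domy.
have [psi1 A1] := subgradients_nonempty.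
set K := fine (f y) - m + eps.
have A_clco : wstar_clco A psi1.
  split; last by move=> C _ _ _; apply.
  by case: A1 => t _ [].
have key l : 0 <= l -> psi1 (y - x) + l * d (y - x) <= K.
  move=> l0; have [_ /(_ (eval_halfspace (y - x) K))] := hrec psi1 A_clco l l0.
  by case=> //; [move=> p []|exact: eval_halfspace_closed|
    exact: eval_halfspace_convex|exact: subgradients_in_halfspace].
rewrite leNgt; apply/negP => dpos.
have k0 := key 0 (lexx 0); rewrite mul0r addr0 in k0.
pose l := (K - psi1 (y - x) + 1) / d (y - x).
have l0 : 0 <= l by rewrite divr_ge0 ?ltW //; lra.
by have := key l l0; rewrite /l mulfVK ?gt_eqF //; lra.
Qed.

End NormalCone.

Theorem corollary2 (R : realType) (X : tvsType R) (T : topologicalType)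
  (ft : T -> X -> \bar R) (x : X) :
  hausdorff_space X ->
  (exists t0 : T, True) ->
  (forall t, proper_fun (ft t)) ->
  (forall t, convex_efun (ft t)) ->
  (forall t, lower_semicontinuous (ft t)) ->
  (* (SH) *)
  hausdorff_space T -> compact [set: T] ->
  (forall z : X, upper_semicontinuous (fun t => ft t z)) ->
  edom (sup_fun ft) x ->
  (-oo < ereal_inf (range (fun t => ft t x)))%E ->
  forall eps : R, 0 < eps ->
    normal_cone (edom (sup_fun ft)) x =
    rec_cone (wstar_clco (\bigcup_(t in [set: T]) eps_subdiff (ft t) eps x)).
Proof.
move=> _ [t0 _] prop cvx lsc _ cT usc xdom hinf eps eps0.
apply/seteqP; split.
- exact: (normal_sub_recession t0 prop cvx lsc cT usc xdom hinf eps0).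
- exact: (recession_sub_normal t0 prop cvx lsc xdom hinf eps0).
Qed.
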